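(* Consider the wireless network described in the context, with nodes sending independent codewords under decode-and-forward. Run the nearest neighbor set algorithm (NNSA), which produces a finite set of candidate routes from node $1$ to node $D$. Then every candidate route that attains the largest value of $R_{\mathrm{DF}}$ among the candidates is optimal for DF, i.e., its rate equals $R_{\mathrm{DF}}^{\max}$.
   Context: Network: a finite set of nodes $\mathcal{S}=\{1,2,\dots,D\}$, $D\ge 2$. Node $1$ is the source and node $D$ is the destination. Received powers: for distinct nodes $i,t$, the power received at $t$ from $i$ is a positive real number $P_{it}$. All receivers have the same noise power $N>0$. Routes: a route is an ordered tuple of distinct nodes $\mathcal{M}=(m_1,\dots,m_L)$ with $m_1=1$ and $L\ge1$. It is a route from the source to the destination if moreover $m_L=D$. For $a\notin\mathcal{M}$, $\mathcal{M}\cup\{a\}$ denotes $(m_1,\dots,m_L,a)$. DF with independent codewords: the reception rate of node $m_t$ ($2\le t\le L$) in route $\mathcal{M}$ is $$R_{m_t}(\mathcal{M})=\tfrac12\log\Big(1+N^{-1}\sum_{i=1}^{t-1}P_{m_i m_t}\Big).$$ The supported DF rate (for $L\ge2$) is $R_{\mathrm{DF}}(\mathcal{M})=\min_{2\le t\le L}R_{m_t}(\mathcal{M})$. Also $R_{\mathrm{DF}}^{\max}=\max R_{\mathrm{DF}}(\mathcal{M})$ over all routes from $1$ to $D$. Nearest neighbor set: for a route $\mathcal{M}$ with $\mathcal{S}\setminus\mathcal{M}\neq\emptyset$, the nearest neighbor set is the smallest nonempty set $\mathcal{N}\subseteq\mathcal{S}\setminus\mathcal{M}$ with the following property. For all $n\in\mathcal{N}$,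 all $a\in\mathcal{S}\setminus(\mathcal{M}\cup\mathcal{N})$ and all $m\in\mathcal{M}$ we have $P_{mn}\ge P_{ma}$. Moreover, for every pair $(n,a)$ with $n\in\mathcal{N}$ and $a\in\mathcal{S}\setminus(\mathcal{M}\cup\mathcal{N})$, at least one of these inequalities (over $m\in\mathcal{M}$) is strict. NNSA: 1. Start with the single partial route $(1)$. 2. For a partial route $\mathcal{M}$ not containing $D$, compute its nearest neighbor set $\mathcal{N}=\{n_1,\dots,n_{|\mathcal{N}|}\}$, and replace $\mathcal{M}$ by the $|\mathcal{N}|$ routes $\mathcal{M}\cup\{n_i\}$, $i=1,\dots,|\mathcal{N}|$. 3. Repeat step 2 on every partial route until every route contains $D$; such routes end at $D$. The resulting routes are the NNSA candidates. *)

From Stdlib Require Import Reals List.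
Import ListNotations.
Open Scope R_scope.

Definition in_S (D i : nat) : Prop := (1 <= i <= D)%nat.

Definition is_route (D : nat) (M : list nat) : Prop :=
  NoDup M /\ Forall (in_S D) M /\ hd 0%nat M = 1%nat /\ M <> [].

Definition is_route_1D (D : nat) (M : list nat) : Prop :=
  is_route D M /\ last M 0%nat = D.

Definition recv_rate (P : nat -> nat -> R) (noise : R) (prefix : list nat) (m : nat) : R :=
  / 2 * ln (1 + / noise * fold_right Rplus 0 (map (fun i => P i m) prefix)).

Fixpoint rates_aux (P : nat -> nat -> R) (noise : R) (prefix rest : list nat) : list R :=
  match rest with
  | [] => []
  | a :: r => recv_rate P noise prefix a :: rates_aux P noise (prefix ++ [a]) r
  end.

Definition rates (P : nat -> nat -> R) (noise : R) (M : list nat) : list R :=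
  match M with
  | [] => []
  | m1 :: r => rates_aux P noise [m1] r
  end.

(* R_DF(M) = min_{2<=t<=L} R_{m_t}(M)  (only meaningful for L >= 2) *)
Definition R_DF (P : nat -> nat -> R) (noise : R) (M : list nat) : R :=
  match rates P noise M with
  | [] => 0
  | x :: xs => fold_left Rmin xs x
  end.

Definition is_R_DF_max (D : nat) (P : nat -> nat -> R) (noise : R) (r : R) : Prop :=
  (exists M, is_route_1D D M /\ R_DF P noise M = r) /\
  (forall M, is_route_1D D M -> R_DF P noise M <= r).

Definition nn_property (D : nat) (P : nat -> nat -> R) (M : list nat) (Nn : nat -> Prop) : Prop :=
  (exists n, Nn n) /\
  (forall n, Nn n -> in_S D n /\ ~ In n M) /\
  (forall n a, Nn n -> in_S D a -> ~ In a M -> ~ Nn a ->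
     (forall m, In m M -> P m a <= P m n) /\
     (exists m, In m M /\ P m a < P m n)).

Definition is_NNS (D : nat) (P : nat -> nat -> R) (M : list nat) (Nn : nat -> Prop) : Prop :=
  nn_property D P M Nn /\
  (forall Nn', nn_property D P M Nn' -> forall x, Nn x -> Nn' x).

Inductive nnsa_partial (D : nat) (P : nat -> nat -> R) : list nat -> Prop :=
  | nnsa_start : nnsa_partial D P [1%nat]
  | nnsa_step : forall M Nn n,
      nnsa_partial D P M -> ~ In D M -> is_NNS D P M Nn -> Nn n ->
      nnsa_partial D P (M ++ [n]).

Definition nnsa_candidate (D : nat) (P : nat -> nat -> R) (M : list nat) : Prop :=
  nnsa_partial D P M /\ last M 0%nat = D.

From Stdlib Require Import Reals List Lra Lia Classical Permutation.
Import ListNotations.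
Open Scope R_scope.

(* The candidate with the largest DF rate trivially satisfies the route
   conditions, so the content is the upper bound: every route M' from the
   source to the destination is dominated by some NNSA candidate C, in the
   sense that every reception rate along C is at least R_DF(M').

   C is built greedily, one hop at a time, keeping the invariant that all
   rates of the partial route Q are >= R_DF(M').  If Q does not yet contain D,
   let a be the first node of M' outside Q; its predecessors in M' all lie in
   Q.  The nearest neighbour set of Q exists (a least element of a chain of
   subsets of the finite node set) and contains a node n receiving at least
   as much power as a from every node of Q.  Hence the rate of n after Q is at
   least the rate of a along M', which is >= R_DF(M'). *)

Definition sum_list (f : nat -> R) (l : list nat) : R := fold_right Rplus 0 (map f l).

Lemma sum_list_nonneg (f : nat -> R) (l : list nat) :
  (forall x, In x l -> 0 <= f x) -> 0 <= sum_list f l.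
Proof.
  induction l as [|a l IH]; intros Hpos; unfold sum_list in *; simpl; [lra|].
  assert (0 <= f a) by (apply Hpos; left; reflexivity).
  assert (0 <= fold_right Rplus 0 (map f l)) by (apply IH; intros; apply Hpos; right; assumption).
  lra.
Qed.

Lemma sum_list_mono (f g : nat -> R) (l : list nat) :
  (forall x, In x l -> f x <= g x) -> sum_list f l <= sum_list g l.
Proof.
  induction l as [|a l IH]; intros Hle; unfold sum_list in *; simpl; [lra|].
  assert (f a <= g a) by (apply Hle; left; reflexivity).
  assert (fold_right Rplus 0 (map f l) <= fold_right Rplus 0 (map g l))
    by (apply IH; intros; apply Hle; right; assumption).
  lra.
Qed.

Lemma sum_list_perm (f : nat -> R) (l1 l2 : list nat) :
  Permutation l1 l2 -> sum_list f l1 = sum_list f l2.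
Proof. induction 1; unfold sum_list in *; simpl; lra. Qed.

Lemma sum_list_filter_le (f : nat -> R) (p : nat -> bool) (l : list nat) :
  (forall x, In x l -> 0 <= f x) -> sum_list f (filter p l) <= sum_list f l.
Proof.
  induction l as [|a l IH]; intros Hpos; simpl; [unfold sum_list; simpl; lra|].
  assert (0 <= f a) by (apply Hpos; left; reflexivity).
  assert (sum_list f (filter p l) <= sum_list f l) by (apply IH; intros; apply Hpos; right; assumption).
  destruct (p a); unfold sum_list in *; simpl; lra.
Qed.

Lemma sum_list_incl_le (f : nat -> R) (l1 l2 : list nat) :
  NoDup l1 -> NoDup l2 -> incl l1 l2 -> (forall x, In x l2 -> 0 <= f x) ->
  sum_list f l1 <= sum_list f l2.
Proof.
  intros Hnd1 Hnd2 Hincl Hpos.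
  set (in_l1 := fun x => if in_dec Nat.eq_dec x l1 then true else false).
  assert (Hperm : Permutation l1 (filter in_l1 l2)).
  { apply NoDup_Permutation; [assumption | apply NoDup_filter; assumption |].
    intros x. rewrite filter_In. unfold in_l1.
    destruct (in_dec Nat.eq_dec x l1) as [Hx | Hx]; split.
    - intros _. split; [apply Hincl, Hx | reflexivity].
    - intros _. exact Hx.
    - intros Hx'. contradiction.
    - intros [_ Hfalse]. discriminate. }
  rewrite (sum_list_perm f _ _ Hperm). apply sum_list_filter_le, Hpos.
Qed.

Lemma fold_min_le (xs : list R) (x : R) :
  fold_left Rmin xs x <= x /\ forall y, In y xs -> fold_left Rmin xs x <= y.
Proof.
  revert x; induction xs as [|z xs IH]; intros x; simpl; [split; [lra | tauto]|].
  destruct (IH (Rmin x z)) as [Hx Hxs]. split.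
  - eapply Rle_trans; [exact Hx | apply Rmin_l].
  - intros y [<- | Hy]; [eapply Rle_trans; [exact Hx | apply Rmin_r] | auto].
Qed.

Lemma fold_min_glb (xs : list R) (x r : R) :
  r <= x -> (forall y, In y xs -> r <= y) -> r <= fold_left Rmin xs x.
Proof.
  revert x; induction xs as [|z xs IH]; intros x Hx Hxs; simpl; [assumption|].
  apply IH; [apply Rmin_glb; auto with datatypes | intros; auto with datatypes].
Qed.

Lemma R_DF_le_rate (P : nat -> nat -> R) (noise : R) (M : list nat) (y : R) :
  In y (rates P noise M) -> R_DF P noise M <= y.
Proof.
  unfold R_DF. destruct (rates P noise M) as [|x xs]; [simpl; tauto|].
  intros [<- | Hy]; [apply (proj1 (fold_min_le xs x)) | apply (proj2 (fold_min_le xs x)), Hy].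
Qed.

Lemma R_DF_ge (P : nat -> nat -> R) (noise : R) (M : list nat) (r : R) :
  rates P noise M <> [] -> (forall y, In y (rates P noise M) -> r <= y) ->
  r <= R_DF P noise M.
Proof.
  unfold R_DF. destruct (rates P noise M) as [|x xs]; [congruence|].
  intros _ Hr. apply fold_min_glb; auto with datatypes.
Qed.

Lemma rates_aux_snoc (P : nat -> nat -> R) (noise : R) (rest p : list nat) (n : nat) :
  rates_aux P noise p (rest ++ [n]) =
  rates_aux P noise p rest ++ [recv_rate P noise (p ++ rest) n].
Proof.
  revert p; induction rest as [|b rest IH]; intros p; simpl; [rewrite app_nil_r; reflexivity|].
  rewrite IH, <- app_assoc. reflexivity.
Qed.

Lemma rates_snoc (P : nat -> nat -> R) (noise : R) (m1 : nat) (rest : list nat) (n : nat) :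
  rates P noise ((m1 :: rest) ++ [n]) =
  rates P noise (m1 :: rest) ++ [recv_rate P noise (m1 :: rest) n].
Proof. apply rates_aux_snoc. Qed.

Lemma rates_aux_in (P : nat -> nat -> R) (noise : R) (pre p : list nat) (a : nat) (post : list nat) :
  In (recv_rate P noise (p ++ pre) a) (rates_aux P noise p (pre ++ a :: post)).
Proof.
  revert p; induction pre as [|b pre IH]; intros p; simpl; [rewrite app_nil_r; left; reflexivity|].
  right. specialize (IH (p ++ [b])). rewrite <- app_assoc in IH. exact IH.
Qed.

Lemma rate_in_rates (P : nat -> nat -> R) (noise : R) (m1 : nat) (pre : list nat) (a : nat) (post : list nat) :
  In (recv_rate P noise (m1 :: pre) a) (rates P noise (m1 :: pre ++ a :: post)).
Proof. apply (rates_aux_in P noise pre [m1]). Qed.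

Lemma recv_rate_mono (P : nat -> nat -> R) (noise : R) (pre Q : list nat) (a b : nat) :
  0 < noise -> 0 <= sum_list (fun i => P i a) pre ->
  sum_list (fun i => P i a) pre <= sum_list (fun i => P i b) Q ->
  recv_rate P noise pre a <= recv_rate P noise Q b.
Proof.
  intros HN Hpos Hle. unfold recv_rate.
  fold (sum_list (fun i => P i a) pre). fold (sum_list (fun i => P i b) Q).
  assert (HinvN : 0 < / noise) by (apply Rinv_0_lt_compat, HN).
  apply Rmult_le_compat_l; [lra|].
  assert (0 <= / noise * sum_list (fun i => P i a) pre) by (apply Rmult_le_pos; lra).
  assert (Hsum : / noise * sum_list (fun i => P i a) pre <= / noise * sum_list (fun i => P i b) Q)
    by (apply Rmult_le_compat_l; lra).
  destruct (Rle_lt_or_eq_dec _ _ Hsum) as [Hlt | Heq].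
  - left. apply ln_increasing; lra.
  - rewrite Heq. lra.
Qed.

(* The elements of l satisfying A, as a list; strictly shorter than l if some
   element of l fails A.  Used as a finite measure of subsets. *)
Lemma sublist_of_pred {T : Type} (A : T -> Prop) (l : list T) :
  exists l', (forall z, In z l' <-> In z l /\ A z) /\ (length l' <= length l)%nat /\
    ((exists z, In z l /\ ~ A z) -> (length l' < length l)%nat).
Proof.
  induction l as [|a l IH].
  - exists []. split; [simpl; tauto | split; [reflexivity | intros (z & [] & _)]].
  - destruct IH as (l' & Hmem & Hle & Hlt). destruct (classic (A a)) as [Ha | Ha].
    + exists (a :: l'). split; [|split].
      * intros z; simpl; rewrite Hmem. intuition (subst; tauto).
      * simpl; lia.
      * intros (z & [<- | Hz] & Hnz); [tauto|]. simpl.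
        assert (length l' < length l)%nat by (apply Hlt; eauto). lia.
    + exists l'. split; [|split].
      * intros z; rewrite Hmem; simpl. intuition (subst; tauto).
      * simpl; lia.
      * intros _. simpl; lia.
Qed.

Lemma chain_has_least {T : Type} (U : list T) (F : (T -> Prop) -> Prop) :
  (forall A, F A -> forall x, A x -> In x U) ->
  (forall A B, F A -> F B -> (forall x, A x -> B x) \/ (forall x, B x -> A x)) ->
  forall A0, F A0 -> exists A, F A /\ forall B, F B -> forall x, A x -> B x.
Proof.
  intros HU Hchain A0 HA0.
  destruct (sublist_of_pred A0 U) as (l0 & Hl0 & _).
  remember (length l0) as k eqn:Hk.
  assert (Hsize : exists l, (forall z, A0 z <-> In z l) /\ (length l <= k)%nat).
  { exists l0. split; [|lia]. intros z. rewrite Hl0. split; [|tauto].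
    intros Hz. split; [apply (HU A0 HA0 z Hz) | exact Hz]. }
  clear Hl0 Hk l0. revert A0 HA0 Hsize.
  induction k as [|k IH]; intros A HA (l & Hl & Hlen).
  - exists A. split; [exact HA|]. intros B _ x Hx.
    destruct l; [apply Hl in Hx; destruct Hx | simpl in Hlen; lia].
  - destruct (classic (forall B, F B -> forall x, A x -> B x)) as [Hleast | Hnot];
      [exists A; split; assumption|].
    apply not_all_ex_not in Hnot as [B Hnot]. apply imply_to_and in Hnot as [HB Hnot].
    apply not_all_ex_not in Hnot as [x Hnot]. apply imply_to_and in Hnot as [Ax nBx].
    assert (HBA : forall z, B z -> A z)
      by (destruct (Hchain A B HA HB) as [HAB | HBA]; [exfalso; exact (nBx (HAB x Ax)) | exact HBA]).
    apply (IH B HB). destruct (sublist_of_pred B l) as (l' & Hl' & _ & Hlt).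
    exists l'. split.
    + intros z. rewrite Hl'. split; [|tauto]. intros Hz. split; [apply Hl, HBA, Hz | exact Hz].
    + assert (length l' < length l)%nat; [|lia]. apply Hlt. exists x. split; [apply Hl|]; assumption.
Qed.

(* Two sets with the nearest-neighbour property are nested: if x is in A but
   not in B, then B is contained in A (otherwise x and a point of B \ A would
   each strictly dominate the other). *)
Lemma nn_property_chain (D : nat) (P : nat -> nat -> R) (M : list nat) (A B : nat -> Prop) :
  nn_property D P M A -> nn_property D P M B ->
  (forall x, A x -> B x) \/ (forall x, B x -> A x).
Proof.
  intros (_ & HA_sub & HA_dom) (_ & HB_sub & HB_dom).
  destruct (classic (forall x, A x -> B x)) as [HAB | HnAB]; [left; exact HAB | right].
  apply not_all_ex_not in HnAB as [x HnAB]. apply imply_to_and in HnAB as [Ax nBx].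
  intros y By. apply NNPP; intros nAy.
  destruct (HB_sub y By) as [yS yM]. destruct (HA_sub x Ax) as [xS xM].
  destruct (HA_dom x y Ax yS yM nAy) as [Hle _].
  destruct (HB_dom y x By xS xM nBx) as [_ (m & Hm & Hlt)].
  specialize (Hle m Hm). lra.
Qed.

(* If some node of S lies outside M, the nearest neighbour set of M exists:
   S \ M itself has the nearest-neighbour property (vacuously), and the sets
   with this property form a chain of subsets of S. *)
Lemma NNS_exists (D : nat) (P : nat -> nat -> R) (M : list nat) :
  (exists a, in_S D a /\ ~ In a M) -> exists Nn, is_NNS D P M Nn.
Proof.
  intros Hout.
  assert (Hcompl : nn_property D P M (fun x => in_S D x /\ ~ In x M)).
  { split; [exact Hout|]. split; [tauto|].
    intros n a _ aS aM nNa. exfalso. apply nNa. split; assumption. }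
  destruct (chain_has_least (seq 1 D) (nn_property D P M)) with (A0 := fun x => in_S D x /\ ~ In x M)
    as (Nn & HNn & Hleast); [| apply nn_property_chain | exact Hcompl | exists Nn; split; assumption].
  intros A (_ & HA_sub & _) x Ax. apply in_seq. destruct (HA_sub x Ax) as [[? ?] _]. lia.
Qed.

Lemma NNS_dominates (D : nat) (P : nat -> nat -> R) (M : list nat) (Nn : nat -> Prop) (a : nat) :
  is_NNS D P M Nn -> in_S D a -> ~ In a M ->
  exists n, Nn n /\ forall m, In m M -> P m a <= P m n.
Proof.
  intros [((n & Hn) & _ & Hdom) _] aS aM.
  destruct (classic (Nn a)) as [Ha | Ha]; [exists a; split; [exact Ha | intros; lra]|].
  exists n. split; [exact Hn | apply (Hdom n a Hn aS aM Ha)].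
Qed.

Lemma last_in {T : Type} (l : list T) (d : T) : l <> [] -> In (last l d) l.
Proof.
  induction l as [|a l IH]; intros Hne; [contradiction|].
  destruct l as [|b l]; [left; reflexivity|]. right. apply IH. discriminate.
Qed.

Lemma first_outside (Q l : list nat) :
  (exists x, In x l /\ ~ In x Q) ->
  exists pre a post, l = pre ++ a :: post /\ incl pre Q /\ ~ In a Q.
Proof.
  induction l as [|b l IH]; intros (x & Hx & HxQ); [destruct Hx|].
  destruct (in_dec Nat.eq_dec b Q) as [HbQ | HbQ].
  - destruct Hx as [<- | Hx]; [contradiction|].
    destruct IH as (pre & a & post & -> & Hpre & HaQ); [exists x; split; assumption|].
    exists (b :: pre), a, post. split; [reflexivity|]. split; [|exact HaQ].
    intros y [<- | Hy]; [exact HbQ | apply Hpre, Hy].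
  - exists [], b, l. split; [reflexivity|]. split; [intros y [] | exact HbQ].
Qed.

Lemma length_avoiding_D (D : nat) (Q : list nat) :
  NoDup Q -> (forall x, In x Q -> in_S D x) -> ~ In D Q -> (length Q <= D - 1)%nat.
Proof.
  intros Hnd HS HD.
  replace (D - 1)%nat with (length (seq 1 (D - 1))) by apply length_seq.
  apply NoDup_incl_length; [exact Hnd|].
  intros x Hx. apply in_seq. destruct (HS x Hx) as [H1 H2].
  assert (x <> D) by (intros ->; contradiction). lia.
Qed.

Section Network.

Variables (D : nat) (P : nat -> nat -> R) (noise : R).
Hypothesis hD : (2 <= D)%nat.
Hypothesis hP : forall i t, in_S D i -> in_S D t -> i <> t -> 0 < P i t.
Hypothesis hN : 0 < noise.

Lemma nnsa_partial_inv (Q : list nat) :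
  nnsa_partial D P Q ->
  NoDup Q /\ (forall x, In x Q -> in_S D x) /\ (exists rest, Q = 1%nat :: rest) /\
  (In D Q -> last Q 0%nat = D).
Proof.
  induction 1 as [|Q Nn n HQ IH HDQ HNn Hn].
  - split; [repeat constructor; simpl; tauto|].
    split; [intros x [<- | []]; unfold in_S; lia|].
    split; [exists []; reflexivity | intros [H | []]; lia].
  - destruct IH as (Hnd & HS & [rest ->] & _).
    destruct HNn as [(_ & Hsub & _) _]. destruct (Hsub n Hn) as [HnS HnQ].
    split; [|split; [|split]].
    + apply NoDup_app; [exact Hnd | repeat constructor; simpl; tauto |].
      intros x Hx [<- | []]. contradiction.
    + intros x Hx. apply in_app_or in Hx as [Hx | [<- | []]]; [apply HS, Hx | exact HnS].
    + exists (rest ++ [n]). reflexivity.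
    + intros HDin. rewrite last_last.
      apply in_app_or in HDin as [H | [H | []]]; [contradiction | exact H].
Qed.

Lemma nnsa_candidate_is_route (C : list nat) : nnsa_candidate D P C -> is_route_1D D C.
Proof.
  intros [HC Hlast]. destruct (nnsa_partial_inv C HC) as (Hnd & HS & [rest ->] & _).
  split; [|exact Hlast]. split; [exact Hnd|]. split; [apply Forall_forall, HS|].
  split; [reflexivity | discriminate].
Qed.

Definition rates_ge (r : R) (Q : list nat) : Prop :=
  forall y, In y (rates P noise Q) -> r <= y.

Lemma nnsa_extend (M' Q : list nat) (r : R) :
  is_route_1D D M' -> rates_ge r M' ->
  nnsa_partial D P Q -> ~ In D Q -> rates_ge r Q ->
  exists n, nnsa_partial D P (Q ++ [n]) /\ rates_ge r (Q ++ [n]).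
Proof.
  intros [(Mnd & MS & Mhd & Mne) Mlast] HrM HQ HDQ HrQ.
  destruct (nnsa_partial_inv Q HQ) as (Qnd & QS & [qrest HQe] & _).
  destruct M' as [|m1 rest]; [contradiction|]. simpl in Mhd. subst m1.
  (* a: the first node of M' outside Q; its predecessors 1 :: pre lie in Q *)
  assert (HDrest : In D rest).
  { assert (HDin : In D (1%nat :: rest)) by (rewrite <- Mlast; apply last_in; discriminate).
    destruct HDin as [H | H]; [lia | exact H]. }
  destruct (first_outside Q rest) as (pre & a & post & Hrest & Hpre & HaQ);
    [exists D; split; assumption|].
  subst rest.
  assert (HaS : in_S D a).
  { rewrite Forall_forall in MS. apply MS. right. apply in_or_app. right. left. reflexivity. }
  assert (Hra : r <= recv_rate P noise (1%nat :: pre) a) by (apply HrM, rate_in_rates).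
  (* n: a nearest neighbour of Q at least as close to Q as a is *)
  destruct (NNS_exists D P Q) as [Nn HNn]; [exists a; split; assumption|].
  destruct (NNS_dominates D P Q Nn a HNn HaS HaQ) as (n & Hn & Hdom).
  exists n. split; [econstructor; eassumption|].
  assert (HposQ : forall q, In q Q -> 0 <= P q a)
    by (intros q Hq; left; apply hP; [apply QS, Hq | exact HaS | intros ->; contradiction]).
  assert (Hpre_incl : incl (1%nat :: pre) Q)
    by (intros x [<- | Hx]; [rewrite HQe; left; reflexivity | apply Hpre, Hx]).
  assert (Hpre_nd : NoDup (1%nat :: pre))
    by (apply (NoDup_app_remove_r (1%nat :: pre) (a :: post)), Mnd).
  assert (Hpow : sum_list (fun i => P i a) (1%nat :: pre) <= sum_list (fun i => P i n) Q).
  { eapply Rle_trans; [apply sum_list_incl_le; [exact Hpre_nd | exact Qnd | exact Hpre_incl | exact HposQ]|].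
    apply sum_list_mono, Hdom. }
  intros y. rewrite HQe, rates_snoc, <- HQe. intros Hy.
  apply in_app_or in Hy as [Hy | [<- | []]]; [apply HrQ, Hy|].
  eapply Rle_trans; [exact Hra|]. apply recv_rate_mono; [exact hN | | exact Hpow].
  apply sum_list_nonneg. intros x Hx. apply HposQ, Hpre_incl, Hx.
Qed.

(* Iterating the extension from any admissible partial route reaches an NNSA
   candidate all of whose rates are >= r; k bounds the remaining hops. *)
Lemma nnsa_reaches_candidate (M' : list nat) (r : R) :
  is_route_1D D M' -> rates_ge r M' ->
  forall k Q, nnsa_partial D P Q -> rates_ge r Q -> (D - length Q <= k)%nat ->
  exists C, nnsa_candidate D P C /\ rates_ge r C.
Proof.
  intros HM' HrM. induction k as [|k IH]; intros Q HQ HrQ Hk;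
    destruct (nnsa_partial_inv Q HQ) as (Qnd & QS & _ & Qlast);
    (destruct (in_dec Nat.eq_dec D Q) as [HDQ | HDQ];
      [exists Q; split; [split; [exact HQ | apply Qlast, HDQ] | exact HrQ]|]);
    pose proof (length_avoiding_D D Q Qnd QS HDQ).
  - lia.
  - destruct (nnsa_extend M' Q r HM' HrM HQ HDQ HrQ) as (n & HQn & HrQn).
    apply (IH (Q ++ [n]) HQn HrQn). rewrite length_app. simpl. lia.
Qed.

Lemma route_dominated_by_candidate (M' : list nat) :
  is_route_1D D M' -> exists C, nnsa_candidate D P C /\ R_DF P noise M' <= R_DF P noise C.
Proof.
  intros HM'.
  assert (HrM : rates_ge (R_DF P noise M') M') by (intros y; apply R_DF_le_rate).
  destruct (nnsa_reaches_candidate M' _ HM' HrM D [1%nat] (nnsa_start D P)) as (C & HC & HrC);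
    [intros y [] | simpl; lia |].
  exists C. split; [exact HC|]. apply R_DF_ge; [|exact HrC].
  destruct HC as [HC Hlast]. destruct (nnsa_partial_inv C HC) as (_ & _ & [rest ->] & _).
  destruct rest as [|b rest]; [simpl in Hlast; lia | discriminate].
Qed.

End Network.

Theorem theorem2 (D : nat) (P : nat -> nat -> R) (noise : R)
  (hD : (2 <= D)%nat)
  (hP : forall i t, in_S D i -> in_S D t -> i <> t -> 0 < P i t)
  (hN : 0 < noise)
  (M : list nat)
  (hM : nnsa_candidate D P M)
  (hbest : forall M', nnsa_candidate D P M' -> R_DF P noise M' <= R_DF P noise M) :
  is_R_DF_max D P noise (R_DF P noise M).
Proof.
  split.
  - exists M. split; [apply (nnsa_candidate_is_route D P hD M hM) | reflexivity].
  - intros M' HM'.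
    destruct (route_dominated_by_candidate D P noise hD hP hN M' HM') as (C & HC & HMC).
    eapply Rle_trans; [exact HMC | apply hbest, HC].
Qed.
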